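(* In the two-cut setting of the context, let $v,z\in\mathbb C$ with $v\ne z$, $v,z$ not poles of $h$ and not in $\mathcal L$. Let $\Omega_k,\Omega^{\varepsilon}_k$ denote the integrals below with all $u_\alpha$-contours equal to $\Gamma(\mathcal L)$ (enclosing $\mathcal L$ but not $v$, $z$ or other poles of $h$), and let $\Omega^{(v)}_k,\Omega^{\varepsilon(v)}_k$ denote the same integrals with all $u_\alpha$-contours equal to a contour $\Gamma^{(v)}(\mathcal L)$ enclosing $\mathcal L\cup\{v\}$ but not $z$ or other poles of $h$. Then $$\Omega_r(v,z)=\Omega^{(v)}_r(v,z)+r(z-v)h(v)\,\Omega^{+1}_{r-1}(v,z),$$ $$\Omega^{-1}_{r+1}(v,z)=\Omega^{-1(v)}_{r+1}(v,z)+(r+1)\frac{h(v)}{z-v}\,\Omega_r(z,v).$$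
   Context: Two-cut hexagon: integers $b,c,d\ge1$, $m_1,m_2,n_1,n_2\ge1$ with $m_1+m_2=n_1+n_2$, $N=b+c$, $r=b-d\ge0$, $\rho=n_1-m_1+b-d\ge0$, $\Sigma=m_1-n_1+c-d\ge0$. With $(a)_k=a(a+1)\cdots(a+k-1)$, $(a)_0=1$, and $x_1=m_1+m_2-1$, $x_{c+1}=n_1-c-1$, $x_{c+d}=n_1-c-d$, $x_{c+d+1}=-c-d-1$, $y_d=m_1-d$: $Q_{\mathcal L}(z)=(z-x_{c+d+1})_b$, $Q_{\mathcal R}(z)=(z-x_1)_c$, $P_\rho(z)=(z-x_{c+d}+1)_\rho$, $P_\Sigma(z)=(z-y_d+1)_\Sigma$, and $h(u)=\frac{Q_{\mathcal R}(u)}{P_\rho(u)P_\Sigma(u)Q_{\mathcal L}(u)}$. $\mathcal L=\{-d-N,\dots,-d-c-1\}$ is the root set of $Q_{\mathcal L}$. With $\Delta_k(u)=\prod_{i<j}(u_i-u_j)$ and contours $\Gamma$ for the $u_\alpha$: $\Omega_k(v,z)=\bigl(\prod_{\alpha=1}^k\oint_\Gamma\frac{du_\alpha h(u_\alpha)}{2\pi i}\frac{z-u_\alpha}{v-u_\alpha}\bigr)\Delta_k^2(u)$, $\Omega^{\varepsilon}_k(v,z)=\bigl(\prod_{\alpha=1}^k\oint_\Gamma\frac{du_\alpha h(u_\alpha)}{2\pi i}(v-u_\alpha)^\varepsilon(z-u_\alpha)^\varepsilon\bigr)\Delta_k^2(u)$ for $\varepsilon=\pm1$ (empty products and $\Delta_0$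 equal $1$). *)

From Stdlib Require Import Reals ZArith List ClassicalEpsilon.
From Coquelicot Require Import Coquelicot.
Open Scope C_scope.

Fixpoint poch (a : C) (k : nat) : C :=
  match k with
  | O => 1
  | S k' => poch a k' * (a + RtoC (INR k'))
  end.

Definition CZ (n : Z) : C := RtoC (IZR n).

Definition rhoZ (b d m1 n1 : nat) : Z :=
  (Z.of_nat n1 - Z.of_nat m1 + Z.of_nat b - Z.of_nat d)%Z.
Definition SigmaZ (c d m1 n1 : nat) : Z :=
  (Z.of_nat m1 - Z.of_nat n1 + Z.of_nat c - Z.of_nat d)%Z.

Definition x1 (m1 m2 : nat) : Z := (Z.of_nat m1 + Z.of_nat m2 - 1)%Z.
Definition xcd (c d n1 : nat) : Z := (Z.of_nat n1 - Z.of_nat c - Z.of_nat d)%Z.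
Definition xcd1 (c d : nat) : Z := (- Z.of_nat c - Z.of_nat d - 1)%Z.
Definition yd (d m1 : nat) : Z := (Z.of_nat m1 - Z.of_nat d)%Z.

Definition QL (b c d : nat) (z : C) : C := poch (z - CZ (xcd1 c d)) b.
Definition QR (c m1 m2 : nat) (z : C) : C := poch (z - CZ (x1 m1 m2)) c.
Definition Prho (b c d m1 n1 : nat) (z : C) : C :=
  poch (z - CZ (xcd c d n1) + 1) (Z.to_nat (rhoZ b d m1 n1)).
Definition PSigma (c d m1 n1 : nat) (z : C) : C :=
  poch (z - CZ (yd d m1) + 1) (Z.to_nat (SigmaZ c d m1 n1)).

Definition hform (b c d m1 m2 n1 : nat) (u : C) : C :=
  QR c m1 m2 u / (Prho b c d m1 n1 u * PSigma c d m1 n1 u * QL b c d u).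

(* h as the rational function: at removable points its value is the limit. *)
Definition has_lim (f : C -> C) (a l : C) : Prop :=
  filterlim f (locally' a) (locally l).

Definition hfun (b c d m1 m2 n1 : nat) (u : C) : C :=
  let f := hform b c d m1 m2 n1 in
  match excluded_middle_informative (exists l, has_lim f u l) with
  | left H => proj1_sig (constructive_indefinite_description _ H)
  | right _ => f u
  end.

Definition is_pole (b c d m1 m2 n1 : nat) (a : C) : Prop :=
  ~ (exists l, has_lim (hform b c d m1 m2 n1) a l).

Definition inL (b c d : nat) (u : C) : Prop :=
  exists j : nat, (j < b)%nat /\ u = CZ (- Z.of_nat d - Z.of_nat c - 1 - Z.of_nat j)%Z.

(* Closed C^1 contours parametrized on [0,1] (piecewise-smooth contours can be
   reparametrized to be C^1), with derivative gamma'. *)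
Definition contour (g g' : R -> C) : Prop :=
  (forall t : R, @is_derive R_AbsRing C_R_NormedModule g t (g' t)) /\
  (forall t : R, @continuous R_UniformSpace C_UniformSpace g' t) /\
  g 0%R = g 1%R.

Definition cint (g g' : R -> C) (f : C -> C) : C :=
  @RInt C_R_CompleteNormedModule (fun t => f (g t) * g' t) 0%R 1%R / (2 * RtoC PI * Ci).

Definition winding (g g' : R -> C) (a : C) : C :=
  cint g g' (fun u => / (u - a)).

Definition on_contour (g : R -> C) (a : C) : Prop := exists t, (0 <= t <= 1)%R /\ g t = a.

(* k-fold integral, all variables on the same contour; u_1 is the outermost *)
Fixpoint mcint (g g' : R -> C) (k : nat) (F : list C -> C) : C :=
  match k with
  | O => F nil
  | S k' => cint g g' (fun u => mcint g g' k' (fun us => F (u :: us)))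
  end.

Fixpoint prodC (l : list C) : C :=
  match l with nil => 1 | x :: l' => x * prodC l' end.

Fixpoint vdm (us : list C) : C :=
  match us with
  | nil => 1
  | u :: us' => prodC (map (fun w => u - w) us') * vdm us'
  end.

Definition Omega (h : C -> C) (g g' : R -> C) (k : nat) (v z : C) : C :=
  mcint g g' k (fun us =>
    prodC (map (fun u => h u * ((z - u) / (v - u))) us) * (vdm us * vdm us)).

Definition OmegaP (h : C -> C) (g g' : R -> C) (k : nat) (v z : C) : C :=
  mcint g g' k (fun us =>
    prodC (map (fun u => h u * ((v - u) * (z - u))) us) * (vdm us * vdm us)).

Definition OmegaM (h : C -> C) (g g' : R -> C) (k : nat) (v z : C) : C :=
  mcint g g' k (fun us =>
    prodC (map (fun u => h u * (/ (v - u) * / (z - u))) us) * (vdm us * vdm us)).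

Definition GammaL (b c d m1 m2 n1 : nat) (v z : C) (g g' : R -> C) : Prop :=
  contour g g' /\
  (forall a, is_pole b c d m1 m2 n1 a \/ a = v \/ a = z -> ~ on_contour g a) /\
  (forall a, inL b c d a -> winding g g' a = 1) /\
  winding g g' v = 0 /\ winding g g' z = 0 /\
  (forall a, is_pole b c d m1 m2 n1 a -> ~ inL b c d a -> winding g g' a = 0).

Definition GammaLv (b c d m1 m2 n1 : nat) (v z : C) (g g' : R -> C) : Prop :=
  contour g g' /\
  (forall a, is_pole b c d m1 m2 n1 a \/ a = v \/ a = z -> ~ on_contour g a) /\
  (forall a, inL b c d a -> winding g g' a = 1) /\
  winding g g' v = 1 /\ winding g g' z = 0 /\
  (forall a, is_pole b c d m1 m2 n1 a -> ~ inL b c d a -> winding g g' a = 0).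

From Stdlib Require Import Reals ZArith List Lra Lia.
From Stdlib Require Import FunctionalExtensionality Classical ClassicalEpsilon.
From Coquelicot Require Import Coquelicot.
Open Scope C_scope.

(* Off a finite set A of its poles, h = N / prod_(a in A) (u - a) with N a polynomial. By partial
   fractions, contour integrals of such rational functions only see the winding numbers around the
   poles: polynomials and (u - a)^(-m), m >= 2, have primitives, and (u - a)^(-1) gives the winding
   number. Hence, for a weight w with a simple pole at v and f a polynomial,
   oint_{Gamma^(v)} w f = oint_Gamma w f + Res_v(w) f(v).
   Moving the k variables of the multiple integral from Gamma^(v) to Gamma one at a time, the i-th
   move contributes the term with u_i = v, where Delta_k^2 = prod_u (v - u)^2 Delta_(k-1)^2 turns w
   into w (v - u)^2. The latter is regular at v, so the contour of each remaining variable is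
   irrelevant and the k terms are equal. For Omega_r, w = h (z - u)/(v - u) has residue
   -(z - v) h(v) and w (v - u)^2 = h (v - u)(z - u); for Omega^(-1)_(r+1), w = h/((v - u)(z - u))
   has residue -h(v)/(z - v) and w (v - u)^2 = h (v - u)/(z - u), the weight of Omega_r(z, v). *)

Notation is_derive_C := (@is_derive R_AbsRing C_R_NormedModule).
Notation continuous_C f x := (@continuous _ C_UniformSpace f x).

Lemma is_derive_pair (f1 f2 : R -> R) (t l1 l2 : R) :
  is_derive f1 t l1 -> is_derive f2 t l2 ->
  is_derive_C (fun s => (f1 s, f2 s) : C) t (l1, l2).
Proof.
  intros H1 H2.
  apply (@filterdiff_comp_2 R_AbsRing R_NormedModule R_NormedModule R_NormedModule
    (prod_NormedModule R_AbsRing R_NormedModule R_NormedModule) (locally t) _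
    f1 f2 (fun a b => (a, b)) _ _ (fun a b => (a, b)) H1 H2).
  apply filterdiff_linear, is_linear_prod; [apply is_linear_fst | apply is_linear_snd].
Qed.

Lemma is_derive_fst (f : R -> C) (t : R) (l : C) :
  is_derive_C f t l -> is_derive (fun s => fst (f s)) t (fst l).
Proof.
  intros H.
  apply (@filterdiff_comp R_AbsRing R_NormedModule C_R_NormedModule R_NormedModule
    (locally t) _ f (fun p : C => fst p) _ (fun p : C => fst p) H).
  apply filterdiff_linear, (@is_linear_fst R_AbsRing R_NormedModule R_NormedModule).
Qed.

Lemma is_derive_snd (f : R -> C) (t : R) (l : C) :
  is_derive_C f t l -> is_derive (fun s => snd (f s)) t (snd l).
Proof.
  intros H.
  apply (@filterdiff_comp R_AbsRing R_NormedModule C_R_NormedModule R_NormedModule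
    (locally t) _ f (fun p : C => snd p) _ (fun p : C => snd p) H).
  apply filterdiff_linear, (@is_linear_snd R_AbsRing R_NormedModule R_NormedModule).
Qed.

Lemma is_derive_C_ext (f1 f2 : R -> C) (t : R) (l1 l2 : C) :
  (forall s, f1 s = f2 s) -> l1 = l2 -> is_derive_C f1 t l1 -> is_derive_C f2 t l2.
Proof. intros Ef <- H. eapply is_derive_ext; eauto. Qed.

Lemma is_derive_Cmult (f k : R -> C) (t : R) (lf lk : C) :
  is_derive_C f t lf -> is_derive_C k t lk ->
  is_derive_C (fun s => f s * k s) t (lf * k t + f t * lk).
Proof.
  intros Hf Hk.
  pose proof (is_derive_fst _ _ _ Hf) as Hf1. pose proof (is_derive_snd _ _ _ Hf) as Hf2.
  pose proof (is_derive_fst _ _ _ Hk) as Hk1. pose proof (is_derive_snd _ _ _ Hk) as Hk2.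
  eapply is_derive_C_ext; [reflexivity | |
    apply (is_derive_pair _ _ _ _ _
      (is_derive_minus _ _ _ _ _ (Derive.is_derive_mult _ _ _ _ _ Hf1 Hk1)
                                 (Derive.is_derive_mult _ _ _ _ _ Hf2 Hk2))
      (is_derive_plus _ _ _ _ _ (Derive.is_derive_mult _ _ _ _ _ Hf1 Hk2)
                                (Derive.is_derive_mult _ _ _ _ _ Hf2 Hk1)))].
  apply injective_projections; simpl; unfold minus, plus, opp, mult; simpl; ring.
Qed.

Lemma is_derive_Cscal (c : C) (f : R -> C) (t : R) (l : C) :
  is_derive_C f t l -> is_derive_C (fun s => c * f s) t (c * l).
Proof.
  intros H. eapply is_derive_C_ext;
    [reflexivity | | apply (is_derive_Cmult (fun _ => c) f t 0 l (is_derive_const _ _) H)].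
  simpl. ring.
Qed.

Lemma is_derive_Cinv (f : R -> C) (t : R) (lf : C) :
  is_derive_C f t lf -> f t <> 0 ->
  is_derive_C (fun s => / f s) t (- lf / (f t * f t)).
Proof.
  intros Hf Hnz.
  pose proof (is_derive_fst _ _ _ Hf) as Hf1. pose proof (is_derive_snd _ _ _ Hf) as Hf2.
  assert (Hd : (fst (f t) ^ 2 + snd (f t) ^ 2 <> 0)%R).
  { intro E. apply Hnz. destruct (f t) as [a b]. simpl in E.
    apply injective_projections; simpl; nra. }
  pose proof (is_derive_plus _ _ _ _ _ (is_derive_pow _ 2 _ _ Hf1) (is_derive_pow _ 2 _ _ Hf2))
    as HD.
  eapply is_derive_C_ext; [reflexivity | |
    apply (is_derive_pair _ _ _ _ _ (is_derive_div _ _ _ _ _ Hf1 HD Hd)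
      (is_derive_div _ _ _ _ _ (is_derive_opp _ _ _ Hf2) HD Hd))].
  simpl in *. destruct (f t) as [a b], lf as [a' b']. simpl in *.
  unfold plus, opp, scal, mult in *; simpl in *.
  apply injective_projections; simpl; field; nra.
Qed.

Lemma is_derive_Cminus_const (f : R -> C) (t : R) (l a : C) :
  is_derive_C f t l -> is_derive_C (fun s => f s - a) t l.
Proof.
  intros H.
  pose proof (@is_derive_plus R_AbsRing C_R_NormedModule f (fun _ => opp a) t l zero
    H (is_derive_const _ _)) as H2.
  rewrite plus_zero_r in H2. exact H2.
Qed.

Lemma is_derive_Cpow (f : R -> C) (t : R) (l : C) (n : nat) :
  is_derive_C f t l ->
  is_derive_C (fun s => f s ^ S n) t (RtoC (INR (S n)) * f t ^ n * l).
Proof.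
  intros H. induction n as [|n IH].
  - apply (is_derive_ext f); [intros; change (f t0 = f t0 * 1); ring|].
    replace (RtoC (INR 1) * f t ^ 0 * l) with l by (simpl; ring). exact H.
  - apply (is_derive_ext (fun s => f s * f s ^ S n)); [reflexivity|].
    replace (RtoC (INR (S (S n))) * f t ^ S n * l)
      with (l * f t ^ S n + f t * (RtoC (INR (S n)) * f t ^ n * l))
      by (rewrite (S_INR (S n)), RtoC_plus; simpl; ring).
    apply is_derive_Cmult; auto.
Qed.

Section Continuity.
Context {U : UniformSpace}.

Lemma continuous_pair (f1 f2 : U -> R) (x : U) :
  continuous f1 x -> continuous f2 x -> continuous_C (fun y => (f1 y, f2 y) : C) x.
Proof.
  intros H1 H2.
  apply (@continuous_comp_2 U R_UniformSpace R_UniformSpace C_UniformSpace f1 f2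
    (fun a b => (a, b) : C) x H1 H2).
  eapply filterlim_ext; [|apply filterlim_id]. intros [a b]; reflexivity.
Qed.

Lemma continuous_Cfst (f : U -> C) (x : U) :
  continuous_C f x -> continuous (fun y => fst (f y)) x.
Proof.
  intros H. apply (@continuous_comp U C_UniformSpace R_UniformSpace f (fun p : C => fst p)); auto.
  destruct (f x). apply (@continuous_fst R_UniformSpace R_UniformSpace).
Qed.

Lemma continuous_Csnd (f : U -> C) (x : U) :
  continuous_C f x -> continuous (fun y => snd (f y)) x.
Proof.
  intros H. apply (@continuous_comp U C_UniformSpace R_UniformSpace f (fun p : C => snd p)); auto.
  destruct (f x). apply (@continuous_snd R_UniformSpace R_UniformSpace).
Qed.

Lemma continuous_Cconst (c : C) (x : U) : continuous_C (fun _ => c) x.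
Proof. apply filterlim_const. Qed.

Lemma continuous_Cplus (f k : U -> C) (x : U) :
  continuous_C f x -> continuous_C k x -> continuous_C (fun y => f y + k y) x.
Proof. intros Hf Hk. apply (@continuous_plus U C_AbsRing C_NormedModule); auto. Qed.

Lemma continuous_Cminus (f k : U -> C) (x : U) :
  continuous_C f x -> continuous_C k x -> continuous_C (fun y => f y - k y) x.
Proof.
  intros Hf Hk. apply continuous_Cplus; auto.
  apply (@continuous_opp U C_AbsRing C_NormedModule); auto.
Qed.

Lemma continuous_Cmult (f k : U -> C) (x : U) :
  continuous_C f x -> continuous_C k x -> continuous_C (fun y => f y * k y) x.
Proof.
  intros Hf Hk P HP. apply locally_C in HP.
  apply (@continuous_mult U C_AbsRing f k x); auto; intros Q HQ; [apply Hf|apply Hk];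
    apply locally_C, HQ.
Qed.

Lemma continuous_Cpow (f : U -> C) (n : nat) (x : U) :
  continuous_C f x -> continuous_C (fun y => f y ^ n) x.
Proof.
  intros H; induction n; simpl; [apply continuous_Cconst | apply continuous_Cmult; auto].
Qed.

Lemma continuous_Cinv (f : U -> C) (x : U) :
  continuous_C f x -> f x <> 0 -> continuous_C (fun y => / f y) x.
Proof.
  intros Hf Hnz.
  pose proof (continuous_Cfst _ _ Hf) as H1. pose proof (continuous_Csnd _ _ Hf) as H2.
  set (n2 := fun y => (fst (f y) ^ 2 + snd (f y) ^ 2)%R).
  assert (Hd : n2 x <> 0%R).
  { unfold n2. intro E. apply Hnz. destruct (f x) as [a b]. simpl in E.
    apply injective_projections; simpl; nra. }
  assert (Hinv : continuous (fun y => / n2 y)%R x).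
  { apply (continuous_comp n2 Rinv); [|apply continuous_Rinv; auto].
    apply (continuous_ext (fun y => fst (f y) * fst (f y) + snd (f y) * snd (f y))%R).
    - intros y; unfold n2; simpl; ring.
    - apply (@continuous_plus U R_AbsRing R_NormedModule);
        apply (@continuous_mult U R_AbsRing); auto. }
  eapply filterlim_ext; [|apply (continuous_pair
    (fun y => fst (f y) * / n2 y)%R (fun y => - snd (f y) * / n2 y)%R)].
  - reflexivity.
  - apply (@continuous_mult U R_AbsRing); auto.
  - apply (@continuous_mult U R_AbsRing); auto.
    apply (@continuous_opp U R_AbsRing R_NormedModule); auto.
Qed.

End Continuity.

(** * Polynomial functions *)

Definition poly_eval (L : list (C * nat)) (u : C) : C :=
  fold_right (fun p acc => fst p * u ^ snd p + acc) 0 L.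

Definition is_poly (f : C -> C) : Prop := exists L, forall u, f u = poly_eval L u.

Lemma poly_eval_app L1 L2 u : poly_eval (L1 ++ L2) u = poly_eval L1 u + poly_eval L2 u.
Proof. induction L1 as [|p L1 IH]; simpl; [ring | rewrite IH; ring]. Qed.

Lemma Cpow_add (u : C) m n : u ^ (m + n) = u ^ m * u ^ n.
Proof. induction m as [|m IH]; simpl; [ring | rewrite IH; ring]. Qed.

Lemma poly_eval_mul L1 L2 u :
  poly_eval (flat_map (fun p => map (fun q => (fst p * fst q, (snd p + snd q)%nat)) L2) L1) u
  = poly_eval L1 u * poly_eval L2 u.
Proof.
  induction L1 as [|p L1 IH]; simpl; [ring|].
  rewrite poly_eval_app, IH.
  assert (Hp : forall M, poly_eval (map (fun q => (fst p * fst q, (snd p + snd q)%nat)) M) u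
                         = fst p * u ^ snd p * poly_eval M u).
  { induction M as [|q M IHM]; simpl; [ring | rewrite IHM, Cpow_add; ring]. }
  rewrite Hp; ring.
Qed.

Lemma is_poly_ext f k : (forall u, f u = k u) -> is_poly f -> is_poly k.
Proof. intros E [L H]. exists L. intros u; rewrite <- E; auto. Qed.

Lemma is_poly_const c : is_poly (fun _ => c).
Proof. exists ((c, 0%nat) :: nil). intros u; simpl; ring. Qed.

Lemma is_poly_id : is_poly (fun u => u).
Proof. exists ((RtoC 1, 1%nat) :: nil). intros u; simpl; ring. Qed.

Lemma is_poly_plus f k : is_poly f -> is_poly k -> is_poly (fun u => f u + k u).
Proof.
  intros [L1 H1] [L2 H2]. exists (L1 ++ L2). intros u. rewrite poly_eval_app, H1, H2; auto.
Qed.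

Lemma is_poly_mult f k : is_poly f -> is_poly k -> is_poly (fun u => f u * k u).
Proof. intros [L1 H1] [L2 H2]. eexists. intros u. rewrite poly_eval_mul, H1, H2; auto. Qed.

Lemma is_poly_scal c f : is_poly f -> is_poly (fun u => c * f u).
Proof. intros; apply is_poly_mult; auto; apply is_poly_const. Qed.

Lemma is_poly_opp f : is_poly f -> is_poly (fun u => - f u).
Proof.
  intros Hf. apply (is_poly_ext (fun u => (-1) * f u)); [intros; ring | apply is_poly_scal; auto].
Qed.

Lemma is_poly_minus f k : is_poly f -> is_poly k -> is_poly (fun u => f u - k u).
Proof. intros Hf Hk. apply is_poly_plus, is_poly_opp; auto. Qed.

Lemma is_poly_sub_const a : is_poly (fun u => u - a).
Proof. apply is_poly_minus; [apply is_poly_id | apply is_poly_const]. Qed.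

Lemma is_poly_pow f n : is_poly f -> is_poly (fun u => f u ^ n).
Proof. intros H; induction n; simpl; [apply is_poly_const | apply is_poly_mult; auto]. Qed.

Lemma poly_factor_root f a : is_poly f ->
  exists q, is_poly q /\ forall u, f u = (u - a) * q u + f a.
Proof.
  intros [L HL].
  assert (Hpow : forall n : nat, exists q, is_poly q /\ forall u, u ^ n = (u - a) * q u + a ^ n).
  { induction n as [|n [q [Hq E]]].
    - exists (fun _ => 0). split; [apply is_poly_const | intros; simpl; ring].
    - exists (fun u => u * q u + a ^ n). split.
      + apply is_poly_plus; [apply is_poly_mult, Hq; apply is_poly_id | apply is_poly_const].
      + intros u; simpl. rewrite E. ring. }
  assert (Hsum : forall L, exists q, is_poly q /\
    forall u, poly_eval L u = (u - a) * q u + poly_eval L a).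
  { induction L0 as [|p L0 [q [Hq E]]].
    - exists (fun _ => 0). split; [apply is_poly_const | intros; simpl; ring].
    - destruct (Hpow (snd p)) as [q1 [Hq1 E1]].
      exists (fun u => fst p * q1 u + q u). split.
      + apply is_poly_plus, Hq. apply is_poly_scal, Hq1.
      + intros u; simpl. rewrite E, E1. ring. }
  destruct (Hsum L) as [q [Hq E]]. exists q. split; auto.
  intros u. rewrite !HL. apply E.
Qed.

Definition roots_poly (A : list C) (u : C) : C := fold_right (fun a acc => (u - a) * acc) 1 A.

Lemma is_poly_roots_poly A : is_poly (roots_poly A).
Proof.
  induction A; simpl; [apply is_poly_const | apply is_poly_mult; auto; apply is_poly_sub_const].
Qed.

Lemma roots_poly_app A B u : roots_poly (A ++ B) u = roots_poly A u * roots_poly B u.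
Proof. induction A; simpl; [ring | rewrite IHA; ring]. Qed.

Lemma roots_poly_repeat a m u : roots_poly (repeat a m) u = (u - a) ^ m.
Proof. induction m; simpl; auto. rewrite IHm; auto. Qed.

Lemma roots_poly_neq0 A u : ~ In u A -> roots_poly A u <> 0.
Proof.
  induction A as [|a A IH]; simpl; intros H.
  - apply C1_nz.
  - apply Cmult_neq_0; [apply Cminus_eq_contra | apply IH]; auto.
Qed.

Lemma roots_poly_eq0 a A : In a A -> roots_poly A a = 0.
Proof.
  induction A as [|b A IH]; simpl; [tauto|].
  intros [H|H]; [subst; ring | rewrite IH; auto; ring].
Qed.

Lemma roots_poly_remove A a u :
  roots_poly A u = (u - a) ^ count_occ Ceq_dec A a * roots_poly (remove Ceq_dec a A) u.
Proof.
  induction A as [|b A IH]; simpl; [ring|].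
  destruct (Ceq_dec a b), (Ceq_dec b a); subst; simpl; try congruence; rewrite IH; ring.
Qed.

Lemma count_occ_remove_length A a :
  (count_occ Ceq_dec A a + length (remove Ceq_dec a A))%nat = length A.
Proof.
  induction A as [|b A IH]; simpl; auto.
  destruct (Ceq_dec a b), (Ceq_dec b a); subst; simpl; try congruence; lia.
Qed.

(** * Contour integrals *)

Lemma is_RInt_Cmult (f : R -> C) (a b : R) (l c : C) :
  @is_RInt C_R_NormedModule f a b l ->
  @is_RInt C_R_NormedModule (fun t => c * f t) a b (c * l).
Proof.
  intros H.
  pose proof (@is_RInt_fct_extend_fst R_NormedModule R_NormedModule f a b l H) as H1.
  pose proof (@is_RInt_fct_extend_snd R_NormedModule R_NormedModule f a b l H) as H2.
  apply (@is_RInt_fct_extend_pair R_NormedModule R_NormedModule); simpl.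
  - eapply is_RInt_ext; [|apply (@is_RInt_minus R_NormedModule);
      [apply (@is_RInt_scal R_NormedModule _ _ _ (fst c) _ H1)
      |apply (@is_RInt_scal R_NormedModule _ _ _ (snd c) _ H2)]].
    intros; simpl. unfold minus, plus, opp, scal; simpl; unfold mult; simpl. ring.
  - eapply is_RInt_ext; [|apply (@is_RInt_plus R_NormedModule);
      [apply (@is_RInt_scal R_NormedModule _ _ _ (fst c) _ H2)
      |apply (@is_RInt_scal R_NormedModule _ _ _ (snd c) _ H1)]].
    intros; simpl. unfold minus, plus, opp, scal; simpl; unfold mult; simpl. ring.
Qed.

Definition avoids (g : R -> C) (A : list C) : Prop :=
  forall a t, In a A -> (0 <= t <= 1)%R -> g t <> a.

Lemma avoids_incl g A B : avoids g A -> incl B A -> avoids g B.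
Proof. intros H HB a t Ha Ht. apply H; auto. Qed.

Lemma avoids_roots_poly g A t : avoids g A -> (0 <= t <= 1)%R -> roots_poly A (g t) <> 0.
Proof. intros H Ht. apply roots_poly_neq0. intro Hin. apply (H (g t) t Hin Ht). auto. Qed.

Definition ex_cint (g g' : R -> C) (F : C -> C) : Prop :=
  ex_RInt (V := C_R_CompleteNormedModule) (fun t => F (g t) * g' t) 0 1.

Lemma INR_S_neq0 n : RtoC (INR (S n)) <> 0.
Proof. intro E. apply (not_0_INR (S n)); [lia|]. injection E; auto. Qed.

Section Contour.
Variables g g' : R -> C.
Hypothesis Hg : contour g g'.

Lemma continuous_contour t : continuous_C g t.
Proof.
  destruct Hg as [Hd _].
  apply (@ex_derive_continuous R_AbsRing C_R_NormedModule). exists (g' t). apply Hd.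
Qed.

Lemma continuous_contour_rat P A t : is_poly P -> avoids g A -> (0 <= t <= 1)%R ->
  continuous_C (fun s => P (g s) / roots_poly A (g s) * g' s) t.
Proof.
  intros HP HA Ht.
  assert (Hpoly : forall Q, is_poly Q -> continuous_C (fun s => Q (g s)) t).
  { intros Q [L HL]. apply (continuous_ext (fun s => poly_eval L (g s))); [intros; auto|].
    clear HL. induction L as [|p L IH]; simpl; [apply continuous_Cconst|].
    apply continuous_Cplus; auto. apply continuous_Cmult; [apply continuous_Cconst|].
    apply continuous_Cpow, continuous_contour. }
  apply continuous_Cmult; [apply continuous_Cmult|].
  - apply Hpoly; auto.
  - apply continuous_Cinv; [apply Hpoly, is_poly_roots_poly | apply avoids_roots_poly; auto].
  - destruct Hg as [_ [Hd' _]]. apply Hd'.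
Qed.

Lemma ex_cint_rat P A : is_poly P -> avoids g A -> ex_cint g g' (fun u => P u / roots_poly A u).
Proof.
  intros HP HA. apply ex_RInt_continuous. intros t Ht.
  rewrite Rmin_left, Rmax_right in Ht by lra.
  apply continuous_contour_rat; auto.
Qed.

Lemma ex_cint_ext F G : (forall t, (0 <= t <= 1)%R -> F (g t) = G (g t)) ->
  ex_cint g g' G -> ex_cint g g' F.
Proof.
  intros E H. eapply ex_RInt_ext; [|exact H].
  intros t Ht. rewrite Rmin_left, Rmax_right in Ht by lra. rewrite E; auto. lra.
Qed.

Lemma ex_cint_scal c F : ex_cint g g' F -> ex_cint g g' (fun u => c * F u).
Proof.
  intros [l Hl]. exists (c * l).
  eapply is_RInt_ext; [|apply (is_RInt_Cmult _ _ _ _ c Hl)]. intros; simpl; ring.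
Qed.

Lemma cint_ext F G : (forall t, (0 <= t <= 1)%R -> F (g t) = G (g t)) ->
  cint g g' F = cint g g' G.
Proof.
  intros E. unfold cint. f_equal. apply RInt_ext.
  intros t Ht. rewrite Rmin_left, Rmax_right in Ht by lra. rewrite E; auto. lra.
Qed.

Lemma cint_plus F G : ex_cint g g' F -> ex_cint g g' G ->
  cint g g' (fun u => F u + G u) = cint g g' F + cint g g' G.
Proof.
  intros [lF HF] [lG HG]. unfold cint.
  assert (H : @is_RInt C_R_NormedModule (fun t => (F (g t) + G (g t)) * g' t) 0 1 (lF + lG)).
  { eapply is_RInt_ext; [|apply (@is_RInt_plus C_R_NormedModule _ _ _ _ _ _ HF HG)].
    intros; simpl. change (@plus C_R_NormedModule ?a ?b) with (Cplus a b). ring. }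
  rewrite (@is_RInt_unique C_R_CompleteNormedModule _ _ _ _ H),
    (is_RInt_unique _ _ _ _ HF), (is_RInt_unique _ _ _ _ HG).
  unfold Cdiv; ring.
Qed.

Lemma cint_scal c F : ex_cint g g' F -> cint g g' (fun u => c * F u) = c * cint g g' F.
Proof.
  intros [l Hl]. unfold cint.
  assert (H : @is_RInt C_R_NormedModule (fun t => (c * F (g t)) * g' t) 0 1 (c * l)).
  { eapply is_RInt_ext; [|apply (is_RInt_Cmult _ _ _ _ c Hl)]. intros; simpl; ring. }
  rewrite (@is_RInt_unique C_R_CompleteNormedModule _ _ _ _ H), (is_RInt_unique _ _ _ _ Hl).
  unfold Cdiv; ring.
Qed.

Lemma cint_exact (Phi phi : C -> C) :
  (forall t, (0 <= t <= 1)%R -> is_derive_C (fun s => Phi (g s)) t (phi (g t) * g' t)) ->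
  (forall t, (0 <= t <= 1)%R -> continuous_C (fun s => phi (g s) * g' s) t) ->
  cint g g' phi = 0.
Proof.
  intros Hd Hcont. destruct Hg as [_ [_ Hclosed]].
  assert (H : @is_RInt C_R_NormedModule (fun t => phi (g t) * g' t) 0 1 (RtoC 0)).
  { replace (RtoC 0) with (@minus C_R_NormedModule (Phi (g 1%R)) (Phi (g 0%R)))
      by (rewrite Hclosed; apply (@minus_eq_zero C_R_NormedModule)).
    apply (@is_RInt_derive C_R_CompleteNormedModule (fun t => Phi (g t)));
      intros t Ht; rewrite Rmin_left, Rmax_right in Ht by lra; auto. }
  unfold cint. rewrite (@is_RInt_unique C_R_CompleteNormedModule _ _ _ _ H). unfold Cdiv. ring.
Qed.

Lemma cint_pow a n : cint g g' (fun u => (u - a) ^ n) = 0.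
Proof.
  apply (cint_exact (fun u => / RtoC (INR (S n)) * (u - a) ^ S n)).
  - intros t _. destruct Hg as [Hd _].
    replace ((g t - a) ^ n * g' t)
      with (/ RtoC (INR (S n)) * (RtoC (INR (S n)) * (g t - a) ^ n * g' t))
      by (field; apply INR_S_neq0).
    apply is_derive_Cscal, is_derive_Cpow, is_derive_Cminus_const, Hd.
  - intros t Ht.
    apply (continuous_ext (fun s => (fun u => (u - a) ^ n) (g s) / roots_poly nil (g s) * g' s)).
    + intros s. change ((g s - a) ^ n / 1 * g' s = (g s - a) ^ n * g' s). field.
    + apply (continuous_contour_rat (fun u => (u - a) ^ n) nil); auto.
      * apply is_poly_pow, is_poly_sub_const.
      * intros ? ? [].
Qed.

Lemma cint_inv_pow a m : avoids g (a :: nil) -> cint g g' (fun u => / (u - a) ^ S (S m)) = 0.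
Proof.
  intros Ha.
  assert (Hna : forall t, (0 <= t <= 1)%R -> g t - a <> 0).
  { intros t Ht E. apply (Ha a t (or_introl eq_refl) Ht). apply Ceq_minus; auto. }
  apply (cint_exact (fun u => - / RtoC (INR (S m)) * / (u - a) ^ S m)).
  - intros t Ht. destruct Hg as [Hd _].
    pose proof (Hna t Ht) as Hx. pose proof (INR_S_neq0 m) as Hm.
    replace (/ (g t - a) ^ S (S m) * g' t) with (- / RtoC (INR (S m)) *
      (- (RtoC (INR (S m)) * (g t - a) ^ m * g' t) / ((g t - a) ^ S m * (g t - a) ^ S m))).
    2: { set (x := g t - a). assert (Hxm : x ^ m <> 0) by (apply Cpow_nz; auto).
         change (- / RtoC (INR (S m)) *
           (- (RtoC (INR (S m)) * x ^ m * g' t) / ((x * x ^ m) * (x * x ^ m)))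
           = / (x * (x * x ^ m)) * g' t).
         field. repeat split; auto. }
    apply is_derive_Cscal, is_derive_Cinv; [|apply Cpow_nz; auto].
    apply is_derive_Cpow, is_derive_Cminus_const, Hd.
  - intros t Ht.
    apply (continuous_ext
      (fun s => (fun _ => 1) (g s) / roots_poly (repeat a (S (S m))) (g s) * g' s)).
    + intros s. rewrite roots_poly_repeat.
      change (1 / (g s - a) ^ S (S m) * g' s = / (g s - a) ^ S (S m) * g' s). unfold Cdiv. ring.
    + apply (continuous_contour_rat (fun _ => 1) (repeat a (S (S m)))); auto;
        [apply is_poly_const|].
      apply (avoids_incl g (a :: nil)); auto.
      intros x Hx. apply repeat_spec in Hx. subst; left; auto.
Qed.

Lemma ex_cint_poly P : is_poly P -> ex_cint g g' P.
Proof.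
  intros HP. apply (ex_cint_ext P (fun u => P u / roots_poly nil u)).
  - intros t _; cbn [roots_poly fold_right]; field.
  - apply ex_cint_rat; auto. intros ? ? [].
Qed.

Lemma cint_poly P : is_poly P -> cint g g' P = 0.
Proof.
  intros [L HL]. rewrite (cint_ext P (poly_eval L)) by (intros; apply HL). clear HL.
  induction L as [|p L IH].
  - rewrite (cint_ext _ (fun _ => 0 * 1)) by (intros; simpl; ring).
    rewrite cint_scal; [ring | apply ex_cint_poly, is_poly_const].
  - rewrite (cint_ext _ (fun u => fst p * (u - 0) ^ snd p + poly_eval L u))
      by (intros; simpl; repeat f_equal; ring).
    rewrite cint_plus, IH, cint_scal, cint_pow; [ring| |apply ex_cint_poly..].
    + apply ex_cint_poly, is_poly_pow, is_poly_sub_const.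
    + apply is_poly_scal, is_poly_pow, is_poly_sub_const.
    + exists L; auto.
Qed.

End Contour.

(** * Partial fractions and residues *)

Lemma partial_fraction_identity (x X L La Pu Q S Pa : C) :
  x <> 0 -> X <> 0 -> L <> 0 -> La <> 0 -> Pu = x * Q + Pa -> L = x * S + La ->
  Pu / (x * X * L) = (Q - Pa / La * S) / (X * L) + Pa / La / (x * X).
Proof.
  intros Hx HX HL HLa EP EL. subst Pu.
  assert (E : Pa = Pa * (L / La) - Pa * x * S / La) by (rewrite EL; field; auto).
  rewrite E at 1. field. repeat split; auto.
Qed.

Lemma cint_partial_fraction P a B m : is_poly P -> ~ In a B ->
  exists Q, is_poly Q /\ forall g g', contour g g' -> avoids g (a :: B) ->
    cint g g' (fun u => P u / roots_poly (repeat a (S m) ++ B) u)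
    = cint g g' (fun u => Q u / roots_poly (repeat a m ++ B) u)
      + P a / roots_poly B a * cint g g' (fun u => / (u - a) ^ S m).
Proof.
  intros HP HaB.
  destruct (poly_factor_root P a HP) as [Q1 [HQ1 EP]].
  destruct (poly_factor_root (roots_poly B) a (is_poly_roots_poly B)) as [Lq [HLq EL]].
  assert (HLa : roots_poly B a <> 0) by (apply roots_poly_neq0; auto).
  set (c := P a / roots_poly B a).
  exists (fun u => Q1 u - c * Lq u). split; [apply is_poly_minus, is_poly_scal; auto|].
  intros g g' Hg HA.
  assert (HAm : avoids g (repeat a m ++ B)).
  { apply (avoids_incl g (a :: B)); auto. intros x Hx.
    apply in_app_or in Hx as [Hx|Hx]; [apply repeat_spec in Hx; left | right]; auto. }
  assert (Hinv : ex_cint g g' (fun u => / (u - a) ^ S m)).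
  { apply (ex_cint_ext g g' _ (fun u => 1 / roots_poly (repeat a (S m)) u)).
    - intros t _. rewrite roots_poly_repeat. unfold Cdiv. ring.
    - apply ex_cint_rat; auto; [apply is_poly_const|].
      apply (avoids_incl g (a :: B)); auto. intros x Hx. apply repeat_spec in Hx. left; auto. }
  rewrite <- cint_scal, <- cint_plus; auto.
  - apply cint_ext. intros t Ht.
    assert (Hx : g t - a <> 0) by (apply Cminus_eq_contra, (HA a t); simpl; auto).
    assert (HL : roots_poly B (g t) <> 0) by (apply (avoids_roots_poly g); auto;
      apply (avoids_incl g (a :: B)); auto; intros x; right; auto).
    rewrite !roots_poly_app, !roots_poly_repeat. simpl Cpow.
    apply partial_fraction_identity; auto; apply Cpow_nz; auto.
  - apply ex_cint_rat; auto. apply is_poly_minus, is_poly_scal; auto.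
  - apply ex_cint_scal; auto.
Qed.

Lemma cint_inv_pow1 g g' a : cint g g' (fun u => / (u - a) ^ 1) = winding g g' a.
Proof. apply cint_ext. intros t _. simpl. rewrite Cmult_1_r. reflexivity. Qed.

Section ContourDeformation.
Variables g1 g1' g2 g2' : R -> C.
Hypotheses (Hg1 : contour g1 g1') (Hg2 : contour g2 g2').

Lemma cint_rat_winding_eq P A : is_poly P -> avoids g1 A -> avoids g2 A ->
  (forall a, In a A -> winding g1 g1' a = winding g2 g2' a) ->
  cint g1 g1' (fun u => P u / roots_poly A u) = cint g2 g2' (fun u => P u / roots_poly A u).
Proof.
  remember (length A) as n eqn:Hn. revert P A Hn.
  induction n as [n IH] using lt_wf_ind. intros P A Hn HP H1 H2 HW.
  destruct A as [|a A0].
  { rewrite (cint_ext g1 g1' _ P), (cint_ext g2 g2' _ P), !cint_poly; auto;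
      intros; cbn [roots_poly fold_right]; field. }
  set (A := a :: A0). set (B := remove Ceq_dec a A).
  assert (HaA : In a A) by (left; auto).
  destruct (count_occ Ceq_dec A a) as [|m] eqn:Em.
  { apply (count_occ_not_In Ceq_dec) in Em. contradiction. }
  assert (HAm : forall u, roots_poly A u = roots_poly (repeat a (S m) ++ B) u).
  { intros u. rewrite roots_poly_app, roots_poly_repeat, <- Em. apply roots_poly_remove. }
  assert (Hincl : incl (a :: B) A).
  { intros x [Hx|Hx]; [subst; auto | apply in_remove in Hx; tauto]. }
  destruct (cint_partial_fraction P a B m HP (remove_In Ceq_dec A a)) as [Q [HQ EQ]].
  rewrite (cint_ext g1 g1' _ (fun u => P u / roots_poly (repeat a (S m) ++ B) u)),
    (cint_ext g2 g2' _ (fun u => P u / roots_poly (repeat a (S m) ++ B) u))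
    by (intros; rewrite HAm; reflexivity).
  rewrite (EQ g1 g1'), (EQ g2 g2'); auto; try (apply (avoids_incl _ A); auto).
  assert (HmB : incl (repeat a m ++ B) A).
  { intros x Hx. apply in_app_or in Hx as [Hx|Hx]; apply Hincl;
      [apply repeat_spec in Hx; left | right]; auto. }
  f_equal; [|f_equal].
  - apply (IH (length (repeat a m ++ B))); auto; try (apply (avoids_incl _ A); auto).
    pose proof (count_occ_remove_length A a) as HL. rewrite Em in HL.
    rewrite length_app, repeat_length. fold B in HL. subst n A. simpl length in *. lia.
  - destruct m as [|m].
    + rewrite !cint_inv_pow1. auto.
    + rewrite !cint_inv_pow; auto; intros x t [Hx|[]] Ht; subst;
        [apply H2 | apply H1]; auto.
Qed.

Lemma cint_rat_residue P v A : is_poly P -> avoids g1 (v :: A) -> avoids g2 (v :: A) ->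
  ~ In v A -> (forall a, In a A -> winding g1 g1' a = winding g2 g2' a) ->
  winding g2 g2' v = winding g1 g1' v + 1 ->
  cint g2 g2' (fun u => P u / roots_poly (v :: A) u)
  = cint g1 g1' (fun u => P u / roots_poly (v :: A) u) + P v / roots_poly A v.
Proof.
  intros HP H1 H2 HvA HW Hv.
  destruct (cint_partial_fraction P v A 0 HP HvA) as [Q [HQ EQ]].
  simpl repeat in EQ. cbn [app] in EQ.
  rewrite (EQ g1 g1'), (EQ g2 g2'), !cint_inv_pow1, Hv; auto.
  rewrite (cint_rat_winding_eq Q A); auto; [ring | |];
    apply (avoids_incl _ (v :: A)); auto; intros x; right; auto.
Qed.

End ContourDeformation.

(** * The weight h as a rational function *)

Lemma locally_neq (u d : C) : d <> u -> @locally C_UniformSpace u (fun y => y <> d).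
Proof.
  intros Hdu. destruct u as [u1 u2], d as [d1 d2].
  destruct (Req_dec d1 u1) as [E1|E1].
  - assert (E2 : d2 <> u2) by (intro; apply Hdu; subst; auto).
    assert (Hp : 0 < Rabs (d2 - u2)) by (apply Rabs_pos_lt; lra).
    exists (mkposreal _ Hp). intros [y1 y2] [_ Hb] E. injection E; intros; subst.
    unfold ball in Hb; simpl in Hb.
    unfold AbsRing_ball, abs, minus, plus, opp in Hb; simpl in Hb. unfold Rminus in Hb. lra.
  - assert (Hp : 0 < Rabs (d1 - u1)) by (apply Rabs_pos_lt; lra).
    exists (mkposreal _ Hp). intros [y1 y2] [Hb _] E. injection E; intros; subst.
    unfold ball in Hb; simpl in Hb.
    unfold AbsRing_ball, abs, minus, plus, opp in Hb; simpl in Hb. unfold Rminus in Hb. lra.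
Qed.

Lemma locally'_notin (u : C) (l : list C) : locally' u (fun y => ~ In y l).
Proof.
  unfold locally', within. induction l as [|d l IH].
  - apply filter_forall. intros y _ [].
  - destruct (Ceq_dec d u) as [E|E].
    + eapply filter_imp; [|exact IH]. intros y H Hy [Hd|Hd]; [subst | apply H]; auto.
    + eapply filter_imp; [|apply filter_and; [exact IH | apply (locally_neq u d E)]].
      intros y [H1 H2] Hy [Hd|Hd]; [subst | apply H1]; auto.
Qed.

Lemma has_lim_continuous (f : C -> C) (u : C) : continuous_C f u -> has_lim f u (f u).
Proof.
  intros H P HP. unfold locally', within, filtermap. apply H in HP.
  eapply filter_imp; [|exact HP]. auto.
Qed.

Lemma has_lim_mult (f k : C -> C) (u x y : C) :
  has_lim f u x -> has_lim k u y -> has_lim (fun w => f w * k w) u (x * y).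
Proof.
  intros Hf Hk.
  assert (Hf' : filterlim f (locally' u) (@locally (AbsRing_UniformSpace C_AbsRing) x))
    by (intros P HP; apply Hf, locally_C, HP).
  assert (Hk' : filterlim k (locally' u) (@locally (AbsRing_UniformSpace C_AbsRing) y))
    by (intros P HP; apply Hk, locally_C, HP).
  intros P HP.
  apply (filterlim_comp_2 f k (fun a b => @mult C_AbsRing a b) Hf' Hk' (filterlim_mult x y)).
  apply locally_C, HP.
Qed.

(* [hfun b c d m1 m2 n1] unfolds to [lim_ext (hform b c d m1 m2 n1)]. *)
Definition lim_ext (f : C -> C) (u : C) : C :=
  match excluded_middle_informative (exists l, has_lim f u l) with
  | left H => proj1_sig (constructive_indefinite_description _ H)
  | right _ => f u
  end.

Lemma lim_ext_has_lim (f : C -> C) (u l : C) : has_lim f u l -> lim_ext f u = l.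
Proof.
  intros Hl. unfold lim_ext. destruct excluded_middle_informative as [He|He].
  - destruct (constructive_indefinite_description _ He) as [l0 Hl0]. simpl.
    apply is_C_lim_unique in Hl0. apply is_C_lim_unique in Hl. congruence.
  - exfalso; apply He; eauto.
Qed.

Lemma continuous_roots_poly (A : list C) (u : C) : continuous_C (roots_poly A) u.
Proof.
  induction A as [|a A IH]; simpl; [apply continuous_Cconst|].
  apply (continuous_Cmult (fun y => y - a) (roots_poly A)); auto.
  apply continuous_Cminus; [apply filterlim_id | apply continuous_Cconst].
Qed.

Fixpoint remove1 (a : C) (l : list C) : list C :=
  match l with
  | nil => nil
  | b :: l' => if Ceq_dec b a then l' else b :: remove1 a l'
  end.

Lemma roots_poly_remove1 a l u : In a l -> roots_poly l u = (u - a) * roots_poly (remove1 a l) u.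
Proof.
  induction l as [|b l IH]; simpl; [tauto|]. intros H.
  destruct (Ceq_dec b a) as [E|E]; [subst; auto|].
  destruct H as [H|H]; [congruence|]. simpl. rewrite IH; auto. ring.
Qed.

Lemma in_remove1 x a l : In x (remove1 a l) -> In x l.
Proof.
  induction l as [|b l IH]; simpl; auto.
  destruct (Ceq_dec b a); simpl; intuition.
Qed.

Lemma roots_poly_cancel (Nr Dr : list C) : exists Nr' Dr',
  incl Dr' Dr /\ (forall x, In x Dr' -> ~ In x Nr') /\
  forall u, ~ In u Dr -> roots_poly Nr u / roots_poly Dr u = roots_poly Nr' u / roots_poly Dr' u.
Proof.
  induction Dr as [|d Dr IH].
  - exists Nr, nil. split; [|split]; [intros x [] | intros x [] | auto].
  - destruct IH as [Nr1 [Dr1 [H1 [H2 H3]]]].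
    assert (Hstep : forall u, ~ In u (d :: Dr) ->
      roots_poly Nr u / roots_poly (d :: Dr) u = roots_poly Nr1 u / roots_poly Dr1 u / (u - d)).
    { intros u Hu. simpl.
      assert (Hud : u - d <> 0) by (apply Cminus_eq_contra; intro; apply Hu; left; auto).
      assert (HDr : roots_poly Dr u <> 0) by (apply roots_poly_neq0; intro; apply Hu; right; auto).
      rewrite <- H3 by (intro; apply Hu; right; auto). field. auto. }
    assert (HDr1 : forall u, ~ In u (d :: Dr) -> roots_poly Dr1 u <> 0)
      by (intros u Hu; apply roots_poly_neq0; intro; apply Hu; right; auto).
    destruct (in_dec Ceq_dec d Nr1) as [Hd|Hd].
    + exists (remove1 d Nr1), Dr1. repeat split.
      * intros x Hx; right; auto.
      * intros x Hx Hx'. apply (H2 x Hx). eapply in_remove1; eauto.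
      * intros u Hu. rewrite Hstep, (roots_poly_remove1 d Nr1 u Hd) by auto. field.
        split; [apply HDr1; auto | apply Cminus_eq_contra; intro; apply Hu; left; auto].
    + exists Nr1, (d :: Dr1). repeat split.
      * intros x [Hx|Hx]; [left | right]; auto.
      * intros x [Hx|Hx]; [subst | apply H2]; auto.
      * intros u Hu. rewrite Hstep by auto. simpl. field.
        split; [apply HDr1; auto | apply Cminus_eq_contra; intro; apply Hu; left; auto].
Qed.

(* Once common roots are cancelled, every remaining root of the denominator is a genuine pole. *)
Lemma rational_lim_ext (Nr Dr : list C) :
  let f u := roots_poly Nr u / roots_poly Dr u in
  exists N A, is_poly N /\ (forall a, In a A -> ~ exists l, has_lim f a l) /\
    (forall u, ~ In u A -> lim_ext f u = N u / roots_poly A u).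
Proof.
  intros f.
  destruct (roots_poly_cancel Nr Dr) as [Nr' [Dr' [H1 [H2 H3]]]].
  assert (Hnear : forall u, locally' u (fun y => f y = roots_poly Nr' y / roots_poly Dr' y)).
  { intros u. eapply filter_imp; [|apply locally'_notin]. intros y Hy. apply H3, Hy. }
  exists (roots_poly Nr'), Dr'. split; [apply is_poly_roots_poly|split].
  - intros a Ha [l Hl].
    assert (L1 : has_lim (fun y => roots_poly Dr' y * f y) a (roots_poly Dr' a * l))
      by (apply has_lim_mult; auto; apply has_lim_continuous, continuous_roots_poly).
    assert (L2 : has_lim (fun y => roots_poly Dr' y * f y) a (roots_poly Nr' a)).
    { apply (filterlim_ext_loc (roots_poly Nr'));
        [|apply has_lim_continuous, continuous_roots_poly].
      eapply filter_imp; [|apply filter_and; [apply (Hnear a) | apply (locally'_notin a Dr')]].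
      intros y [Hy Hy']. rewrite Hy. field. apply roots_poly_neq0; auto. }
    apply is_C_lim_unique in L1. apply is_C_lim_unique in L2.
    rewrite L1, roots_poly_eq0 in L2 by auto.
    apply (roots_poly_neq0 Nr' a); [apply H2; auto|]. rewrite <- L2. ring.
  - intros u Hu. apply lim_ext_has_lim.
    apply (filterlim_ext_loc (fun y => roots_poly Nr' y / roots_poly Dr' y)).
    + eapply filter_imp; [|apply (Hnear u)]. intros y Hy; auto.
    + apply (has_lim_continuous (fun y => roots_poly Nr' y / roots_poly Dr' y)).
      apply continuous_Cmult; [apply continuous_roots_poly|].
      apply continuous_Cinv; [apply continuous_roots_poly | apply roots_poly_neq0; auto].
Qed.

Fixpoint poch_roots (x : C) (k : nat) : list C :=
  match k with O => nil | S k' => (x - RtoC (INR k')) :: poch_roots x k' end.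

Lemma poch_roots_poly a x k u : a = u - x -> poch a k = roots_poly (poch_roots x k) u.
Proof. intros E. induction k as [|k IH]; simpl; auto. rewrite IH, E. ring. Qed.

Lemma hform_roots_poly b c d m1 m2 n1 : exists Nr Dr,
  forall u, hform b c d m1 m2 n1 u = roots_poly Nr u / roots_poly Dr u.
Proof.
  exists (poch_roots (CZ (x1 m1 m2)) c),
    (poch_roots (CZ (xcd c d n1) - 1) (Z.to_nat (rhoZ b d m1 n1)) ++
     poch_roots (CZ (yd d m1) - 1) (Z.to_nat (SigmaZ c d m1 n1)) ++
     poch_roots (CZ (xcd1 c d)) b).
  intros u. unfold hform, QR, Prho, PSigma, QL. rewrite !roots_poly_app.
  rewrite (poch_roots_poly _ (CZ (x1 m1 m2)) _ u),
    (poch_roots_poly _ (CZ (xcd c d n1) - 1) _ u),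
    (poch_roots_poly _ (CZ (yd d m1) - 1) _ u),
    (poch_roots_poly _ (CZ (xcd1 c d)) _ u) by ring.
  rewrite Cmult_assoc. reflexivity.
Qed.

Lemma hfun_rational b c d m1 m2 n1 : exists N A, is_poly N /\
  (forall a, In a A -> is_pole b c d m1 m2 n1 a) /\
  (forall u, ~ In u A -> hfun b c d m1 m2 n1 u = N u / roots_poly A u).
Proof.
  destruct (hform_roots_poly b c d m1 m2 n1) as [Nr [Dr E]].
  assert (Ef : hform b c d m1 m2 n1 = fun u => roots_poly Nr u / roots_poly Dr u)
    by (apply functional_extensionality; auto).
  destruct (rational_lim_ext Nr Dr) as [N [A [HN [HA Hh]]]].
  exists N, A. split; [|split]; auto.
  - intros a Ha. unfold is_pole. rewrite Ef. apply HA; auto.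
  - intros u Hu. change (lim_ext (hform b c d m1 m2 n1) u = N u / roots_poly A u).
    rewrite Ef. apply Hh; auto.
Qed.

(** * Iterated integrals *)

Definition mpoly_eval (L : list (nat * (list C -> C))%type) (u : C) (us : list C) : C :=
  fold_right (fun p acc => u ^ fst p * snd p us + acc) 0 L.

Fixpoint is_mpoly (n : nat) (F : list C -> C) : Prop :=
  match n with
  | O => True
  | S n' => exists L : list (nat * (list C -> C))%type,
      List.Forall (fun p => is_mpoly n' (snd p)) L /\
      forall u us, length us = n' -> F (u :: us) = mpoly_eval L u us
  end.

Lemma mpoly_eval_app L1 L2 u us :
  mpoly_eval (L1 ++ L2) u us = mpoly_eval L1 u us + mpoly_eval L2 u us.
Proof. induction L1 as [|p L1 IH]; simpl; [ring | rewrite IH; ring]. Qed.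

Lemma is_mpoly_ext n F G : (forall l, length l = n -> F l = G l) -> is_mpoly n F -> is_mpoly n G.
Proof.
  destruct n as [|n]; simpl; auto.
  intros E [L [HL EL]]. exists L. split; auto. intros u us Hl. rewrite <- E; simpl; auto.
Qed.

Lemma is_mpoly_const n c : is_mpoly n (fun _ => c).
Proof.
  induction n; simpl; auto.
  exists ((0%nat, fun _ => c) :: nil). split; [constructor; auto | intros; simpl; ring].
Qed.

Lemma is_mpoly_plus n F G : is_mpoly n F -> is_mpoly n G -> is_mpoly n (fun l => F l + G l).
Proof.
  destruct n as [|n]; simpl; auto.
  intros [L1 [H1 E1]] [L2 [H2 E2]]. exists (L1 ++ L2). split.
  - apply Forall_app; auto.
  - intros u us Hl. rewrite mpoly_eval_app, E1, E2; auto.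
Qed.

Lemma is_mpoly_scal n c F : is_mpoly n F -> is_mpoly n (fun l => c * F l).
Proof.
  revert c F. induction n as [|n IH]; simpl; auto.
  intros c F [L [H E]]. exists (map (fun p => (fst p, fun us => c * snd p us)) L). split.
  - rewrite Forall_map. eapply Forall_impl; [|exact H]. intros p Hp; simpl. apply IH; auto.
  - intros u us Hl. rewrite E; auto. clear. induction L; simpl; [ring | rewrite <- IHL; ring].
Qed.

Lemma is_mpoly_minus n F G : is_mpoly n F -> is_mpoly n G -> is_mpoly n (fun l => F l - G l).
Proof.
  intros HF HG. apply (is_mpoly_ext n (fun l => F l + (-1) * G l)); [intros; ring|].
  apply is_mpoly_plus, is_mpoly_scal; auto.
Qed.

Lemma is_mpoly_mult n F G : is_mpoly n F -> is_mpoly n G -> is_mpoly n (fun l => F l * G l).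
Proof.
  revert F G. induction n as [|n IH]; simpl; auto.
  intros F G [L1 [H1 E1]] [L2 [H2 E2]].
  exists (flat_map (fun p =>
    map (fun q => ((fst p + fst q)%nat, fun us => snd p us * snd q us)) L2) L1).
  split.
  - apply Forall_flat_map. eapply Forall_impl; [|exact H1]. intros p Hp.
    rewrite Forall_map. eapply Forall_impl; [|exact H2]. intros q Hq. simpl. apply IH; auto.
  - intros u us Hl. rewrite E1, E2; auto. clear - u us.
    induction L1 as [|p L1 IH]; simpl; [ring|]. rewrite mpoly_eval_app, <- IH.
    assert (Hp : forall M,
      mpoly_eval (map (fun q => ((fst p + fst q)%nat, fun us => snd p us * snd q us)) M) u us
      = u ^ fst p * snd p us * mpoly_eval M u us).
    { induction M as [|q M IHM]; simpl; [ring | rewrite IHM, Cpow_add; ring]. }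
    rewrite Hp. ring.
Qed.

Lemma is_mpoly_eval n L u : List.Forall (fun p => is_mpoly n (snd p)) L ->
  is_mpoly n (fun us => mpoly_eval L u us).
Proof.
  induction L as [|p L IH]; intros H; simpl; [apply is_mpoly_const|].
  inversion H; subst. apply is_mpoly_plus, IH; auto. apply is_mpoly_scal; auto.
Qed.

Lemma is_mpoly_cons n F u : is_mpoly (S n) F -> is_mpoly n (fun us => F (u :: us)).
Proof.
  intros [L [H E]]. apply (is_mpoly_ext n (fun us => mpoly_eval L u us)).
  - intros; rewrite E; auto.
  - apply is_mpoly_eval; auto.
Qed.

Lemma is_mpoly_nth n i : is_mpoly n (fun us => nth i us 0).
Proof.
  revert i. induction n as [|n IH]; intros i; simpl; auto. destruct i as [|i].
  - exists ((1%nat, fun _ => RtoC 1) :: nil).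
    split; [constructor; [exact (is_mpoly_const n (RtoC 1)) | auto] | intros; simpl; ring].
  - exists ((0%nat, fun us : list C => nth i us 0) :: nil).
    split; [constructor; [exact (IH i) | auto] | intros; simpl; ring].
Qed.

Fixpoint prod_nat (n : nat) (f : nat -> C) : C :=
  match n with O => 1 | S n' => f O * prod_nat n' (fun i => f (S i)) end.

Lemma prodC_map_prod_nat (F : C -> C) us :
  prodC (map F us) = prod_nat (length us) (fun i => F (nth i us 0)).
Proof. induction us; simpl; auto. rewrite IHus; auto. Qed.

Lemma is_mpoly_prod_nat n m (f : nat -> list C -> C) :
  (forall i, is_mpoly n (f i)) -> is_mpoly n (fun us => prod_nat m (fun i => f i us)).
Proof.
  revert f. induction m as [|m IH]; intros f Hf; simpl; [apply is_mpoly_const|].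
  apply is_mpoly_mult; [auto | apply (IH (fun i => f (S i))); auto].
Qed.

Lemma is_mpoly_vdm n : is_mpoly n vdm.
Proof.
  induction n as [|n IH]; [simpl; auto|].
  assert (H : is_mpoly (S n)
    (fun l => prod_nat n (fun i => nth 0 l 0 - nth (S i) l 0) * vdm (tl l))).
  { apply is_mpoly_mult.
    - apply is_mpoly_prod_nat. intros i. apply is_mpoly_minus; apply is_mpoly_nth.
    - exists ((0%nat, vdm) :: nil). split; [constructor; auto | intros; simpl; ring]. }
  destruct H as [L [HL E]]. exists L. split; auto.
  intros u us Hl. rewrite <- E; auto. simpl. rewrite prodC_map_prod_nat, Hl. auto.
Qed.

Lemma is_mpoly_vdm_sq n : is_mpoly n (fun us => vdm us * vdm us).
Proof. apply is_mpoly_mult; apply is_mpoly_vdm. Qed.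

Fixpoint insert_at (j : nat) (v : C) (l : list C) : list C :=
  match j, l with
  | O, _ => v :: l
  | S j', nil => v :: nil
  | S j', x :: l' => x :: insert_at j' v l'
  end.

Lemma insert_at_length j v l : length (insert_at j v l) = S (length l).
Proof. revert l; induction j; intros [|x l]; simpl; auto. Qed.

Lemma is_mpoly_insert_at j : forall n F v, (j <= n)%nat -> is_mpoly (S n) F ->
  is_mpoly n (fun us => F (insert_at j v us)).
Proof.
  induction j as [|j IH]; intros n F v Hj HF; [apply is_mpoly_cons; auto|].
  destruct n as [|n]; [lia|].
  destruct HF as [L [H E]].
  exists (map (fun p => (fst p, fun us => snd p (insert_at j v us))) L). split.
  - rewrite Forall_map. eapply Forall_impl; [|exact H]. intros p Hp; simpl. apply IH; auto. lia.
  - intros u us Hl. simpl. rewrite E by (rewrite insert_at_length; auto).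
    clear. induction L; simpl; auto. rewrite IHL; auto.
Qed.

Lemma prodC_map_mult (F K : C -> C) us :
  prodC (map (fun u => F u * K u) us) = prodC (map F us) * prodC (map K us).
Proof. induction us; simpl; [ring | rewrite IHus; ring]. Qed.

Lemma prodC_map_insert_at (F : C -> C) j v : forall us,
  prodC (map F (insert_at j v us)) = F v * prodC (map F us).
Proof. induction j as [|j IH]; intros [|x us]; simpl; try ring. rewrite IH. ring. Qed.

Lemma vdm_sq_insert_at j v : forall us, vdm (insert_at j v us) * vdm (insert_at j v us)
  = prodC (map (fun u => (v - u) * (v - u)) us) * (vdm us * vdm us).
Proof.
  assert (Hsq : forall x us, prodC (map (fun u => (x - u) * (x - u)) us)
                 = prodC (map (fun u => x - u) us) * prodC (map (fun u => x - u) us))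
    by (intros x us; rewrite prodC_map_mult; reflexivity).
  induction j as [|j IH]; intros [|x us]; simpl insert_at; simpl vdm; try (simpl; ring).
  - rewrite Hsq. simpl. ring.
  - rewrite prodC_map_insert_at.
    transitivity ((x - v) * (x - v)
      * (prodC (map (fun w => x - w) us) * prodC (map (fun w => x - w) us))
      * (vdm (insert_at j v us) * vdm (insert_at j v us))); [ring|].
    rewrite IH. simpl. ring.
Qed.

Definition functional := ((C -> C) -> C)%type.

Fixpoint iter_int (Ts : list functional) (F : list C -> C) : C :=
  match Ts with
  | nil => F nil
  | T :: Ts' => T (fun u => iter_int Ts' (fun us => F (u :: us)))
  end.

Lemma iter_int_ext Ts : forall F G, (forall l, length l = length Ts -> F l = G l) ->
  iter_int Ts F = iter_int Ts G.
Proof.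
  induction Ts as [|T Ts IH]; intros F G E; simpl; [apply E; auto|].
  f_equal. apply functional_extensionality. intros u. apply IH. intros l Hl. apply E. simpl; auto.
Qed.

Lemma mcint_iter_int g g' k : forall F,
  mcint g g' k F = iter_int (@repeat functional (cint g g') k) F.
Proof.
  induction k as [|k IH]; intros F; simpl; auto.
  f_equal. apply functional_extensionality. intros u. apply IH.
Qed.

Section Weight.
Variable w : C -> C.

Definition wprod (us : list C) : C := prodC (map w us).

(* The functionals of interest are contour integrals, which are only known to be linear on
   integrable functions; [w] times a polynomial is the class used here. *)
Definition linear_on (T : functional) : Prop :=
  (forall f k, is_poly f -> is_poly k ->
     T (fun u => w u * (f u + k u)) = T (fun u => w u * f u) + T (fun u => w u * k u)) /\
  (forall c f, is_poly f -> T (fun u => w u * (c * f u)) = c * T (fun u => w u * f u)).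

Definition iter_linear_on (Ts : list functional) : Prop :=
  (forall p q, is_mpoly (length Ts) p -> is_mpoly (length Ts) q ->
     iter_int Ts (fun us => wprod us * (p us + q us))
     = iter_int Ts (fun us => wprod us * p us) + iter_int Ts (fun us => wprod us * q us)) /\
  (forall c p, is_mpoly (length Ts) p ->
     iter_int Ts (fun us => wprod us * (c * p us)) = c * iter_int Ts (fun us => wprod us * p us)).

Lemma iter_int_mpoly_eval Ts L u : iter_linear_on Ts ->
  List.Forall (fun p => is_mpoly (length Ts) (snd p)) L ->
  iter_int Ts (fun us => wprod us * mpoly_eval L u us)
  = fold_right (fun p acc => u ^ fst p * iter_int Ts (fun us => wprod us * snd p us) + acc) 0 L.
Proof.
  intros [Hp Hs]. induction L as [|p L IH]; intros HF; simpl.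
  - rewrite (iter_int_ext Ts _ (fun us => wprod us * (0 * 0))) by (intros; ring).
    rewrite Hs by apply is_mpoly_const. ring.
  - inversion HF; subst. rewrite Hp, Hs, IH; auto.
    + apply is_mpoly_scal; auto.
    + apply is_mpoly_eval; auto.
Qed.

Lemma is_poly_iter_int Ts p : iter_linear_on Ts -> is_mpoly (S (length Ts)) p ->
  is_poly (fun u => iter_int Ts (fun us => wprod us * p (u :: us))).
Proof.
  intros HL [L [HF E]].
  exists (map (fun q => (iter_int Ts (fun us => wprod us * snd q us), fst q)) L).
  intros u. rewrite (iter_int_ext Ts _ (fun us => wprod us * mpoly_eval L u us))
    by (intros; rewrite E; auto).
  rewrite iter_int_mpoly_eval; auto. clear. induction L; simpl; auto. rewrite IHL. ring.
Qed.

Lemma iter_int_cons T Ts p : iter_linear_on Ts -> is_mpoly (S (length Ts)) p ->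
  iter_int (T :: Ts) (fun us => wprod us * p us)
  = T (fun u => w u * iter_int Ts (fun us => wprod us * p (u :: us))).
Proof.
  intros [_ Hs] HP. simpl. f_equal. apply functional_extensionality. intros u.
  rewrite <- Hs by (apply is_mpoly_cons; auto).
  apply iter_int_ext. intros; unfold wprod; simpl; ring.
Qed.

Lemma iter_linear_on_Forall Ts : List.Forall linear_on Ts -> iter_linear_on Ts.
Proof.
  induction Ts as [|T Ts IH]; intros HT; [split; intros; simpl; ring|].
  inversion HT as [|? ? [Tp Ts'] HTs]; subst. specialize (IH HTs).
  pose proof IH as [IHp IHs]. simpl length.
  split.
  - intros p q Hp Hq. rewrite !iter_int_cons; auto; [|apply is_mpoly_plus; auto].
    rewrite <- Tp by (apply is_poly_iter_int; auto).
    f_equal. apply functional_extensionality. intros u. f_equal.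
    rewrite <- IHp by (apply is_mpoly_cons; auto). auto.
  - intros c p Hp. rewrite !iter_int_cons; auto; [|apply is_mpoly_scal; auto].
    rewrite <- Ts' by (apply is_poly_iter_int; auto).
    f_equal. apply functional_extensionality. intros u. f_equal.
    rewrite <- IHs by (apply is_mpoly_cons; auto). auto.
Qed.

End Weight.

Fixpoint sum_nat (f : nat -> C) (n : nat) : C :=
  match n with O => 0 | S n' => sum_nat f n' + f n' end.

Lemma sum_nat_const (f : nat -> C) X k :
  (forall i, (i < k)%nat -> f i = X) -> sum_nat f k = RtoC (INR k) * X.
Proof.
  induction k as [|k IH]; intros Hf; cbn [sum_nat]; [simpl; ring|].
  rewrite IH, (Hf k) by (first [lia | intros; apply Hf; lia]). rewrite S_INR, RtoC_plus. ring.
Qed.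

Section Telescope.
Variables (w : C -> C) (T1 T2 : functional) (v rho : C).
Hypotheses (HT1 : linear_on w T1) (HT2 : linear_on w T2).
Hypothesis HT12 : forall f, is_poly f ->
  T2 (fun u => w u * f u) = T1 (fun u => w u * f u) - rho * f v.

Lemma iter_int_residue_step Tout : forall Tin p,
  List.Forall (linear_on w) Tout -> List.Forall (linear_on w) Tin ->
  is_mpoly (length Tout + S (length Tin)) p ->
  iter_int (Tout ++ T2 :: Tin) (fun us => wprod w us * p us)
  = iter_int (Tout ++ T1 :: Tin) (fun us => wprod w us * p us)
    - rho * iter_int (Tout ++ Tin) (fun us => wprod w us * p (insert_at (length Tout) v us)).
Proof.
  induction Tout as [|T Tout IH]; intros Tin p HTo HTi Hp.
  - simpl app. simpl length in Hp.
    assert (HLi : iter_linear_on w Tin) by (apply iter_linear_on_Forall; auto).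
    rewrite !iter_int_cons, HT12 by (try apply is_poly_iter_int; auto). reflexivity.
  - inversion HTo as [|? ? [Tp Ts] HTo']; subst. simpl app. simpl length in *.
    pose (pv := fun us => p (insert_at (S (length Tout)) v us)).
    change (fun us => wprod w us * p (insert_at (S (length Tout)) v us))
      with (fun us => wprod w us * pv us).
    assert (Hlin : forall Ts, List.Forall (linear_on w) Ts -> iter_linear_on w (Tout ++ Ts))
      by (intros; apply iter_linear_on_Forall, Forall_app; auto).
    assert (Hl : forall T', length (Tout ++ T' :: Tin) = (length Tout + S (length Tin))%nat)
      by (intros; rewrite length_app; simpl; lia).
    assert (Hpv : is_mpoly (S (length (Tout ++ Tin))) pv).
    { rewrite length_app. apply is_mpoly_insert_at; [lia|].
      replace (S (S (length Tout + length Tin))) with (S (length Tout + S (length Tin))) by lia.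
      auto. }
    rewrite (iter_int_cons w T (Tout ++ T2 :: Tin)), (iter_int_cons w T (Tout ++ T1 :: Tin)),
      (iter_int_cons w T (Tout ++ Tin) pv); auto; try rewrite Hl; auto.
    transitivity (T (fun u => w u *
      (iter_int (Tout ++ T1 :: Tin) (fun us => wprod w us * p (u :: us))
       + (- rho) * iter_int (Tout ++ Tin) (fun us => wprod w us * pv (u :: us))))).
    + f_equal. apply functional_extensionality. intros u.
      rewrite IH; auto; [unfold pv; simpl insert_at; ring|].
      apply is_mpoly_cons.
      replace (S (length Tout + S (length Tin))) with (S (length Tout) + S (length Tin))%nat by lia.
      auto.
    + rewrite Tp, Ts; [ring | | apply is_poly_iter_int; auto; rewrite Hl; auto
                          | apply is_poly_scal];
      apply (is_poly_iter_int w (Tout ++ Tin) pv); auto.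
Qed.

Lemma iter_int_telescope k p : is_mpoly k p -> forall j, (j <= k)%nat ->
  iter_int (repeat T2 j ++ repeat T1 (k - j)) (fun us => wprod w us * p us)
  = iter_int (repeat T1 k) (fun us => wprod w us * p us)
    - rho * sum_nat (fun i => iter_int (repeat T2 i ++ repeat T1 (k - 1 - i))
                                 (fun us => wprod w us * p (insert_at i v us))) j.
Proof.
  intros Hp. induction j as [|j IH]; intros Hj; [simpl; rewrite Nat.sub_0_r; ring|].
  change (repeat T2 (S j)) with (T2 :: repeat T2 j).
  rewrite repeat_cons, <- app_assoc. simpl app.
  replace (k - j)%nat with (S (k - S j)) in IH by lia. simpl repeat in IH.
  assert (Hrep : forall T, linear_on w T -> forall n, List.Forall (linear_on w) (repeat T n))
    by (intros T HT n; apply Forall_forall; intros x Hx; apply repeat_spec in Hx; subst; auto).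
  rewrite iter_int_residue_step, IH; [|lia | apply Hrep; auto | apply Hrep; auto |].
  - cbn [sum_nat]. rewrite repeat_length.
    replace (k - 1 - j)%nat with (k - S j)%nat by lia. ring.
  - rewrite !repeat_length. replace (j + S (k - S j))%nat with k by lia. auto.
Qed.

End Telescope.

Lemma linear_on_mult_poly w q T : is_poly q -> linear_on w T -> linear_on (fun u => w u * q u) T.
Proof.
  intros Hq [Tp Ts]. split.
  - intros f k Hf Hk.
    replace (fun u => w u * q u * (f u + k u)) with (fun u => w u * (q u * f u + q u * k u))
      by (apply functional_extensionality; intros; ring).
    rewrite Tp by (apply is_poly_mult; auto).
    f_equal; f_equal; apply functional_extensionality; intros; ring.
  - intros c f Hf.
    replace (fun u => w u * q u * (c * f u)) with (fun u => w u * (c * (q u * f u)))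
      by (apply functional_extensionality; intros; ring).
    rewrite Ts by (apply is_poly_mult; auto).
    f_equal; f_equal; apply functional_extensionality; intros; ring.
Qed.

(* The second telescoping, with [w'] and residue [0], shows that the mixed integrals produced by
   the first one all agree. *)
Lemma iter_int_vdm_residue (w w' : C -> C) (T1 T2 : functional) v rho k :
  linear_on w T1 -> linear_on w T2 ->
  (forall f, is_poly f -> T2 (fun u => w u * f u) = T1 (fun u => w u * f u) - rho * f v) ->
  (forall u, w u * ((v - u) * (v - u)) = w' u) ->
  iter_int (repeat T2 k) (fun us => wprod w us * (vdm us * vdm us))
  = iter_int (repeat T1 k) (fun us => wprod w us * (vdm us * vdm us))
    - rho * RtoC (INR k) * iter_int (repeat T1 (k - 1)) (fun us => wprod w' us * (vdm us * vdm us)).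
Proof.
  intros HT1 HT2 HT12 Hw.
  set (q := fun u => (v - u) * (v - u)).
  assert (Ew' : w' = fun u => w u * q u)
    by (apply functional_extensionality; intros; rewrite <- Hw; reflexivity).
  assert (Hq : is_poly q).
  { apply is_poly_mult; apply is_poly_minus; first [apply is_poly_const | apply is_poly_id]. }
  assert (HT12' : forall f, is_poly f ->
    T2 (fun u => w' u * f u) = T1 (fun u => w' u * f u) - 0 * f v).
  { intros f Hf. rewrite Ew'.
    replace (fun u => w u * q u * f u) with (fun u => w u * (q u * f u))
      by (apply functional_extensionality; intros; ring).
    rewrite HT12 by (apply is_poly_mult; auto). unfold q. ring. }
  pose proof (iter_int_telescope w T1 T2 v rho HT1 HT2 HT12 k _ (is_mpoly_vdm_sq k) k (le_n k))
    as Hk.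
  rewrite Nat.sub_diag in Hk. change (repeat T1 0) with (@nil functional) in Hk.
  rewrite app_nil_r in Hk. rewrite Hk.
  rewrite (sum_nat_const _ (iter_int (repeat T1 (k - 1))
    (fun us => wprod w' us * (vdm us * vdm us)))); [ring|].
  intros i Hi.
  rewrite (iter_int_ext _ _ (fun us => wprod w' us * (vdm us * vdm us))).
  - rewrite Ew' in HT12' |- *.
    rewrite (iter_int_telescope _ T1 T2 v 0 (linear_on_mult_poly w q T1 Hq HT1)
      (linear_on_mult_poly w q T2 Hq HT2) HT12' (k - 1) _ (is_mpoly_vdm_sq (k - 1)) i)
      by lia.
    ring.
  - intros l _. rewrite vdm_sq_insert_at. unfold wprod.
    rewrite Ew', (prodC_map_mult w q). unfold q. ring.
Qed.

(** * Deforming the contours of the multiple integrals *)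

Lemma cint_linear_on g g' w N A : contour g g' -> is_poly N -> avoids g A ->
  (forall u, ~ In u A -> w u = N u / roots_poly A u) -> linear_on w (cint g g').
Proof.
  intros Hg HN HA Hw.
  assert (Hwg : forall f t, (0 <= t <= 1)%R ->
    w (g t) * f (g t) = N (g t) * f (g t) / roots_poly A (g t))
    by (intros f t Ht; rewrite Hw by (intro Hin; apply (HA _ t Hin Ht); auto); unfold Cdiv; ring).
  assert (Hex : forall f, is_poly f -> ex_cint g g' (fun u => w u * f u)).
  { intros f Hf. apply (ex_cint_ext g g' _ (fun u => N u * f u / roots_poly A u)); auto.
    apply (ex_cint_rat g g' Hg); [apply is_poly_mult|]; auto. }
  split.
  - intros f k Hf Hk. rewrite <- cint_plus by auto.
    apply cint_ext. intros; ring.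
  - intros c f Hf. rewrite <- cint_scal by auto.
    apply cint_ext. intros; ring.
Qed.

Lemma cint_weight_residue g g' gv gv' w N B v : contour g g' -> contour gv gv' -> is_poly N ->
  avoids g (v :: B) -> avoids gv (v :: B) -> ~ In v B ->
  (forall a, In a B -> winding g g' a = winding gv gv' a) ->
  winding gv gv' v = winding g g' v + 1 ->
  (forall u, ~ In u (v :: B) -> w u = N u / roots_poly (v :: B) u) ->
  forall f, is_poly f -> cint gv gv' (fun u => w u * f u)
    = cint g g' (fun u => w u * f u) + N v / roots_poly B v * f v.
Proof.
  intros Hg Hgv HN H1 H2 HvB HW Hv Hw f Hf.
  assert (Hext : forall g0 g0', avoids g0 (v :: B) ->
    cint g0 g0' (fun u => w u * f u) = cint g0 g0' (fun u => N u * f u / roots_poly (v :: B) u)).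
  { intros g0 g0' H0. apply cint_ext. intros t Ht.
    rewrite Hw by (intro Hin; apply (H0 _ t Hin Ht); auto). unfold Cdiv. ring. }
  rewrite !Hext, (cint_rat_residue g g' gv gv'); auto; [|apply is_poly_mult; auto].
  unfold Cdiv. ring.
Qed.

Lemma mcint_vdm_residue g g' gv gv' (w w' : C -> C) N B v k :
  contour g g' -> contour gv gv' -> is_poly N ->
  avoids g (v :: B) -> avoids gv (v :: B) -> ~ In v B ->
  (forall a, In a B -> winding g g' a = winding gv gv' a) ->
  winding gv gv' v = winding g g' v + 1 ->
  (forall u, ~ In u (v :: B) -> w u = N u / roots_poly (v :: B) u) ->
  (forall u, w u * ((v - u) * (v - u)) = w' u) ->
  mcint g g' k (fun us => prodC (map w us) * (vdm us * vdm us))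
  = mcint gv gv' k (fun us => prodC (map w us) * (vdm us * vdm us))
    - N v / roots_poly B v * RtoC (INR k)
      * mcint g g' (k - 1) (fun us => prodC (map w' us) * (vdm us * vdm us)).
Proof.
  intros Hg Hgv HN H1 H2 HvB HW Hv Hw Hw'.
  rewrite !mcint_iter_int.
  change (fun us => prodC (map w us) * (vdm us * vdm us))
    with (fun us => wprod w us * (vdm us * vdm us)).
  change (fun us => prodC (map w' us) * (vdm us * vdm us))
    with (fun us => wprod w' us * (vdm us * vdm us)).
  rewrite (iter_int_vdm_residue w w' (cint g g') (cint gv gv') v (- (N v / roots_poly B v)) k).
  - ring.
  - apply (cint_linear_on g g' w N (v :: B)); auto.
  - apply (cint_linear_on gv gv' w N (v :: B)); auto.
  - intros f Hf. rewrite (cint_weight_residue g g' gv gv' w N B v); auto. ring.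
  - exact Hw'.
Qed.

Lemma GammaL_GammaLv_deformation b c d m1 m2 n1 v z g g' gv gv' A :
  GammaL b c d m1 m2 n1 v z g g' -> GammaLv b c d m1 m2 n1 v z gv gv' ->
  (forall a, In a A -> is_pole b c d m1 m2 n1 a) ->
  contour g g' /\ contour gv gv' /\ avoids g (v :: z :: A) /\ avoids gv (v :: z :: A) /\
  (forall a, In a (z :: A) -> winding g g' a = winding gv gv' a) /\
  winding gv gv' v = winding g g' v + 1.
Proof.
  intros [Hg [Hon [HwL [Hwv [Hwz Hwp]]]]] [Hgv [Hon' [HwL' [Hwv' [Hwz' Hwp']]]]] HA.
  assert (Havoid : forall g0, (forall a, is_pole b c d m1 m2 n1 a \/ a = v \/ a = z ->
                     ~ on_contour g0 a) -> avoids g0 (v :: z :: A)).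
  { intros g0 H0 a t Ha Ht E. apply (H0 a); [|exists t; auto].
    destruct Ha as [Ha|[Ha|Ha]]; auto. }
  refine (conj Hg (conj Hgv (conj (Havoid g Hon) (conj (Havoid gv Hon') (conj _ _))))).
  - intros a [Ha|Ha]; [subst; rewrite Hwz, Hwz'; auto|].
    destruct (classic (inL b c d a)); [rewrite HwL, HwL' | rewrite Hwp, Hwp']; auto.
  - rewrite Hwv, Hwv'. ring.
Qed.

Lemma Cmult_div_sq (a x y : C) : a * (y / x) * (x * x) = a * (x * y).
Proof.
  destruct (Ceq_dec x 0) as [->|Hx]; unfold Cdiv; [ring|].
  transitivity (a * y * (/ x * x) * x); [ring | rewrite Cinv_l by auto; ring].
Qed.

Lemma Cmult_inv_sq (a x y : C) : a * (/ x * / y) * (x * x) = a * (x / y).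
Proof.
  destruct (Ceq_dec x 0) as [->|Hx]; unfold Cdiv; [ring|].
  transitivity (a * / y * (/ x * x) * x); [ring | rewrite Cinv_l by auto; ring].
Qed.

Section ContourShift.
Variables (h N : C -> C) (A : list C) (g g' gv gv' : R -> C) (v z : C).
Hypotheses (Hg : contour g g') (Hgv : contour gv gv') (HN : is_poly N).
Hypotheses (HvA : ~ In v A) (Hvz : v <> z).
Hypotheses (Hav : avoids g (v :: z :: A)) (Hav' : avoids gv (v :: z :: A)).
Hypothesis HW : forall a, In a (z :: A) -> winding g g' a = winding gv gv' a.
Hypothesis Hv : winding gv gv' v = winding g g' v + 1.
Hypothesis Hh : forall u, ~ In u A -> h u = N u / roots_poly A u.

Lemma Omega_contour_shift r :
  Omega h g g' r v z
  = Omega h gv gv' r v z + RtoC (INR r) * (z - v) * h v * OmegaP h g g' (r - 1) v z.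
Proof.
  unfold Omega, OmegaP.
  rewrite (mcint_vdm_residue g g' gv gv' _ (fun u => h u * ((v - u) * (z - u)))
    (fun u => - (N u * (z - u))) A v r); auto.
  - rewrite (Hh v) by auto. field. apply roots_poly_neq0; auto.
  - apply is_poly_opp, is_poly_mult, is_poly_minus; auto;
      first [apply is_poly_const | apply is_poly_id].
  - apply (avoids_incl _ (v :: z :: A)); auto. intros x [->|Hx]; simpl; auto.
  - apply (avoids_incl _ (v :: z :: A)); auto. intros x [->|Hx]; simpl; auto.
  - intros a Ha. apply HW. right; auto.
  - intros u Hu. simpl in Hu. rewrite Hh by tauto.
    change (roots_poly (v :: A) u) with ((u - v) * roots_poly A u).
    field. repeat split; try apply roots_poly_neq0; try apply Cminus_eq_contra; intro; subst; tauto.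
  - intros u. apply Cmult_div_sq.
Qed.

Lemma OmegaM_contour_shift r :
  OmegaM h g g' (S r) v z
  = OmegaM h gv gv' (S r) v z + RtoC (INR (S r)) * (h v / (z - v)) * Omega h g g' r z v.
Proof.
  unfold Omega, OmegaM.
  rewrite (mcint_vdm_residue g g' gv gv' _ (fun u => h u * ((v - u) / (z - u)))
    N (z :: A) v (S r)); auto.
  - simpl (S r - 1)%nat. rewrite Nat.sub_0_r, (Hh v) by auto.
    change (roots_poly (z :: A) v) with ((v - z) * roots_poly A v).
    field. repeat split; try apply roots_poly_neq0; try apply Cminus_eq_contra; auto.
  - simpl. intros [E|E]; auto.
  - intros u Hu. simpl in Hu. rewrite Hh by tauto.
    change (roots_poly (v :: z :: A) u) with ((u - v) * ((u - z) * roots_poly A u)).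
    field. repeat split; try apply roots_poly_neq0; try apply Cminus_eq_contra; intro; subst; tauto.
  - intros u. apply Cmult_inv_sq.
Qed.

End ContourShift.

Theorem lemma5p3 (b c d m1 m2 n1 n2 : nat)
  (hb : (1 <= b)%nat) (hc : (1 <= c)%nat) (hd : (1 <= d)%nat)
  (hm1 : (1 <= m1)%nat) (hm2 : (1 <= m2)%nat) (hn1 : (1 <= n1)%nat) (hn2 : (1 <= n2)%nat)
  (hmn : (m1 + m2 = n1 + n2)%nat)
  (hr : (d <= b)%nat)
  (hrho : (0 <= rhoZ b d m1 n1)%Z) (hSig : (0 <= SigmaZ c d m1 n1)%Z)
  (v z : C) (hvz : v <> z)
  (hvp : ~ is_pole b c d m1 m2 n1 v) (hzp : ~ is_pole b c d m1 m2 n1 z)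
  (hvL : ~ inL b c d v) (hzL : ~ inL b c d z)
  (g g' gv gv' : R -> C)
  (hG : GammaL b c d m1 m2 n1 v z g g')
  (hGv : GammaLv b c d m1 m2 n1 v z gv gv') :
  let h := hfun b c d m1 m2 n1 in
  let r := (b - d)%nat in
  Omega h g g' r v z =
    Omega h gv gv' r v z + RtoC (INR r) * (z - v) * h v * OmegaP h g g' (r - 1) v z /\
  OmegaM h g g' (S r) v z =
    OmegaM h gv gv' (S r) v z + RtoC (INR (S r)) * (h v / (z - v)) * Omega h g g' r z v.
Proof.
  intros h r.
  destruct (hfun_rational b c d m1 m2 n1) as [N [A [HN [HpA Hh]]]].
  destruct (GammaL_GammaLv_deformation b c d m1 m2 n1 v z g g' gv gv' A hG hGv HpA)
    as [Hg [Hgv [Hav [Hav' [HW Hv]]]]].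
  assert (HvA : ~ In v A) by (intro; apply hvp, HpA; auto).
  split; [apply (Omega_contour_shift h N A) | apply (OmegaM_contour_shift h N A)]; auto.
Qed.
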